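(* Let $\lambda\in(0,1)$ and let $C>0$ be a constant. Assume $1<p<\frac{1}{1-\lambda}$ and define $q$ by $\frac{1}{q}=\frac{1}{p}-(1-\lambda)$. Then there is a constant $K$ (independent of $N$ and $f$) such that for all $N\in\mathbb{N}$ and all $f\in\ell^p(\mathbb{Z})$, $$\sup_{0<\alpha\leq CN^{-1/q}\|f\|_p} \alpha^{q}\,\big|\{x\in\mathbb{Z};\ J_{\lambda,N} f(x)>\alpha\}\big| \leq K\|f\|^q_p,$$ where $J_{\lambda,N} f(x)=\sum_{r\leq N,\ r \text{ prime}}\frac{f(x-r)}{r^{\lambda}}\log r$ and $|\cdot|$ denotes cardinality.
   Context: For $f:\mathbb{Z}\to\mathbb{R}$, $\|f\|_p$ denotes the $\ell^p(\mathbb{Z})$-norm. $\log$ is the natural logarithm. *)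

From HB Require Import structures.
From mathcomp Require Import all_boot all_order all_algebra.
From mathcomp Require Import all_classical all_reals all_analysis.
Set Implicit Arguments. Unset Strict Implicit. Unset Printing Implicit Defensive.
Import Order.TTheory GRing.Theory Num.Theory.
Local Open Scope classical_set_scope.
Local Open Scope ring_scope.

Definition lp_sum (R : realType) (p : R) (f : int -> R) : \bar R :=
  esum [set: int] (fun x => ((`|f x|) `^ p)%:E).

Definition in_lp (R : realType) (p : R) (f : int -> R) : Prop :=
  (lp_sum p f < +oo)%E.

Definition lp_norm (R : realType) (p : R) (f : int -> R) : R :=
  (fine (lp_sum p f)) `^ (p^-1).

Definition J (R : realType) (lam : R) (N : nat) (f : int -> R) (x : int) : R :=
  \sum_(r < N.+1 | prime r) f (x - (r : nat)%:Z) / ((r : nat)%:R `^ lam) * ln (r : nat)%:R.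

From HB Require Import structures.
From mathcomp Require Import all_boot all_order all_algebra.
From mathcomp Require Import all_classical all_reals all_analysis.
From mathcomp Require Import zify ring lra.
Set Implicit Arguments. Unset Strict Implicit. Unset Printing Implicit Defensive.
Import Order.TTheory GRing.Theory Num.Theory.
Local Open Scope classical_set_scope.
Local Open Scope ring_scope.

(* Chebyshev's argument (the primes in (m + 1, 2m + 1] divide binom(2m + 1, m),
   which is at most 4^m) gives sum_(r <= N prime) log r / r^lam <= K0 N^(1 - lam).
   J_(lam,N) f is dominated by the convolution of |f| with these weights, so
   Jensen's inequality gives alpha^p |{J f > alpha}| <= (K0 N^(1 - lam))^p ||f||_p^p.
   Writing alpha^q = alpha^(q - p) alpha^p and using alpha <= C N^(-1/q) ||f||_p,
   the powers of N cancel exactly because 1/q = 1/p - (1 - lam). *)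

Lemma prime_ndvd_fact r m : prime r -> (m < r)%N -> ~~ (r %| m`!)%N.
Proof.
move=> pr; elim: m => [|m IHm] ltmr; first by rewrite fact0 Euclid_dvd1.
by rewrite factS Euclid_dvdM // negb_or IHm ?(ltnW ltmr) // gtnNdvd.
Qed.

Definition mid_primorial (m : nat) : nat :=
  \prod_(m.+2 <= r < m.*2.+2 | prime r) r.

Lemma mid_primorial_gt0 m : (0 < mid_primorial m)%N.
Proof. by rewrite prodn_cond_gt0 // => r /prime_gt0. Qed.

Lemma mid_primorial_dvd_bin m : (mid_primorial m %| 'C(m.*2.+1, m))%N.
Proof.
have bin_fact_mid : ('C(m.*2.+1, m) * m`! = \prod_(m.+2 <= k < m.*2.+2) k)%N.
  apply/eqP; rewrite -(eqn_pmul2r (fact_gt0 m.+1)) -mulnA [X in _ == X]mulnC.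
  rewrite -fact_split; last by rewrite -addnn; lia.
  have <- : (m.*2.+1 - m = m.+1)%N by rewrite -addnn; lia.
  by rewrite bin_fact // -addnn; lia.
have coprime_fact : coprime (mid_primorial m) m`!.
  rewrite /mid_primorial big_seq_cond; apply: (big_ind (coprime^~ m`!)).
  - exact: coprime1n.
  - by move=> x y cx cy; rewrite coprimeMl cx cy.
  move=> r /andP[]; rewrite mem_index_iota => /andP[lo _] pr.
  by rewrite prime_coprime // prime_ndvd_fact //; lia.
rewrite -(Gauss_dvdl _ coprime_fact) bin_fact_mid (bigID prime) /=.
exact: dvdn_mulr.
Qed.

Lemma bin_mid_le_exp4 m : ('C(m.*2.+1, m) <= 4 ^ m)%N.
Proof.
have bin_sym : 'C(m.*2.+1, m.+1) = 'C(m.*2.+1, m).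
  by rewrite -bin_sub -?addnn; [congr 'C(_, _) | ]; lia.
have two_bins : ('C(m.*2.+1, m) + 'C(m.*2.+1, m.+1) <= 2 ^ m.*2.+1)%N.
  have hm : (m < m.*2.+2)%N by rewrite -addnn; lia.
  have hm1 : (m.+1 < m.*2.+2)%N by rewrite -addnn; lia.
  rewrite -[2%N]/(1 + 1)%N expnDn (bigD1 (Ordinal hm)) //=.
  rewrite (bigD1 (Ordinal hm1)) /=; last by rewrite -val_eqE /=; lia.
  by rewrite !exp1n !muln1 addnA leq_addr.
rewrite bin_sym addnn expnS -mul2n leq_pmul2l // in two_bins.
by rewrite -[4%N]/(2 ^ 2)%N -expnM mul2n.
Qed.

Lemma mid_primorial_le_exp4 m : (mid_primorial m <= 4 ^ m)%N.
Proof.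
apply: leq_trans (bin_mid_le_exp4 m).
by apply: dvdn_leq (mid_primorial_dvd_bin m); rewrite bin_gt0 -addnn; lia.
Qed.

Lemma ln_prod_nat (R : realType) (I : Type) (s : seq I) (P : pred I) (F : I -> nat) :
  (forall i, P i -> (0 < F i)%N) ->
  ln ((\prod_(i <- s | P i) F i)%N%:R : R) = \sum_(i <- s | P i) ln (F i)%:R.
Proof.
move=> F_gt0; elim: s => [|i s IHs]; first by rewrite !big_nil ln1.
rewrite !big_cons; case: ifP => // Pi.
by rewrite natrM lnM ?IHs // posrE ltr0n ?F_gt0 ?prodn_cond_gt0.
Qed.

Section PrimeWeights.
Variables (R : realType) (lam : R).

Definition prime_weight (r : nat) : R := (r%:R `^ lam)^-1 * ln r%:R.

Definition prime_weight_sum (n : nat) : R :=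
  \sum_(0 <= r < n.+1 | prime r) prime_weight r.

Lemma prime_weight_ge0 r : (0 < r)%N -> 0 <= prime_weight r.
Proof. by move=> r_gt0; rewrite mulr_ge0 ?invr_ge0 ?powR_ge0 ?ln_ge0 ?ler1n. Qed.

Lemma prime_weight_sum_ge0 n : 0 <= prime_weight_sum n.
Proof.
by rewrite sumr_ge0 // => r /prime_gt0; apply: prime_weight_ge0.
Qed.

Lemma prime_weight_sum0 : prime_weight_sum 0 = 0.
Proof. by rewrite /prime_weight_sum big_mkcond big_nat1. Qed.

Lemma prime_weight_sumS n : prime_weight_sum n.+1 =
  prime_weight_sum n + (if prime n.+1 then prime_weight n.+1 else 0).
Proof. by rewrite /prime_weight_sum big_mkcond big_nat_recr //= -big_mkcond. Qed.

Hypothesis lam_ge0 : 0 <= lam.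

(* The primes in (m + 1, 2m + 1] weigh at most (m + 1)^-lam each and their
   product is at most 4^m. *)
Lemma prime_weight_sum_double m : prime_weight_sum m.*2.+1 <=
  prime_weight_sum m.+1 + ln 4 * m.+1%:R `^ (1 - lam).
Proof.
rewrite /prime_weight_sum (big_cat_nat _ (n := m.+2)) //=; last first.
  by rewrite -addnn; lia.
rewrite lerD2l.
have m1_gt0 : (0 : R) < m.+1%:R by rewrite ltr0n.
apply: (@le_trans _ _ ((m.+1%:R `^ lam)^-1 *
    \sum_(m.+2 <= r < m.*2.+2 | prime r) ln r%:R)).
  rewrite mulr_sumr big_seq_cond [X in _ <= X]big_seq_cond ler_sum // => r.
  rewrite mem_index_iota => /andP[/andP[lo _] pr].
  rewrite ler_wpM2r ?ln_ge0 ?ler1n ?prime_gt0 //.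
  rewrite lef_pV2 ?posrE ?powR_gt0 ?ltr0n //; last by lia.
  by rewrite ge0_ler_powR ?nnegrE ?ler0n // ler_nat; lia.
rewrite -ln_prod_nat; last by move=> r /prime_gt0.
have -> : m.+1%:R `^ (1 - lam) = m.+1%:R / m.+1%:R `^ lam :> R.
  by rewrite powRB ?powRr1 ?ler0n // pnatr_eq0 implybT.
rewrite mulrA mulrC [ln 4 * _]mulrC.
apply: ler_wpM2r; first by rewrite invr_ge0 powR_ge0.
apply: (@le_trans _ _ (ln (4 ^ m)%N%:R)).
  by rewrite ler_ln ?posrE ?ltr0n ?expn_gt0 ?mid_primorial_gt0 // ler_nat
    mid_primorial_le_exp4.
rewrite natrX lnXn // -[ln 4 *+ m]mulr_natl.
by apply: ler_wpM2r; rewrite ?ln_ge0 ?ler1n ?ler_nat.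
Qed.

Hypothesis lam_lt1 : lam < 1.

Lemma powR_nat_homo :
  {homo (fun n : nat => n%:R `^ (1 - lam) : R) : a b / (a <= b)%N >-> a <= b}.
Proof.
by move=> a b ab; rewrite ge0_ler_powR ?nnegrE ?ler0n ?ler_nat ?subr_ge0 ?(ltW lam_lt1).
Qed.

(* The step [prime_weight_sum_double] passes from m + 1 to 2m + 1 >= 3/2 (m + 1),
   so K works as soon as ln 4 + K <= K (3/2)^(1 - lam). *)
Lemma prime_weight_sum_le :
  exists2 K : R, 0 <= K & forall n, prime_weight_sum n <= K * n%:R `^ (1 - lam).
Proof.
have lam1_gt0 : 0 < 1 - lam by rewrite subr_gt0.
set c := (3 / 2 : R) `^ (1 - lam).
have c_gt1 : 1 < c.
  have := @gt0_ltr_powR R (1 - lam) lam1_gt0 1 (3 / 2).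
  by rewrite !nnegrE powR1 /= => ->; lra.
have ln2_ge0 : 0 <= ln (2 : R) by rewrite ln_ge0 // ler1n.
set K := ln 4 / (c - 1) + ln 2.
have K_ge0 : 0 <= K by rewrite addr_ge0 // divr_ge0 ?ln_ge0 ?ler1n // subr_ge0 ltW.
have K_step : ln 4 + K <= K * c.
  rewrite (_ : K * c = K + K * (c - 1)); last by ring.
  rewrite addrC lerD2l /K mulrDl mulfVK.
    by rewrite lerDl mulr_ge0 // subr_ge0 ltW.
  by rewrite subr_eq0 gt_eqF.
exists K => // n; elim/ltn_ind: n => -[|[|[|n]]] IHn.
- by rewrite prime_weight_sum0 mulr_ge0 ?powR_ge0.
- by rewrite prime_weight_sumS prime_weight_sum0 add0r mulr_ge0 ?powR_ge0.
- rewrite !prime_weight_sumS prime_weight_sum0 /= !add0r.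
  apply: (@le_trans _ _ (ln 2)).
    rewrite /prime_weight ger_pMl ?ln_gt0 ?ltr1n // invf_le1 ?powR_gt0 ?ltr0n //.
    by rewrite -[X in X <= _](powRr0 2) ler_powR // ler1n.
  apply: (@le_trans _ _ K).
    by rewrite lerDr divr_ge0 ?ln_ge0 ?ler1n // subr_ge0 ltW.
  by rewrite ler_peMr // -[X in X <= _](powRr0 2) ler_powR ?ler1n // ltW.
- have [odd_n|even_n] := boolP (odd n.+3).
  + have [m en] : exists m, n.+3 = m.*2.+1.
      by exists n.+3./2; rewrite -[LHS]odd_double_half odd_n add1n.
    have m_ge1 : (1 <= m)%N by lia.
    rewrite en; apply: le_trans (prime_weight_sum_double m) _.
    apply: (@le_trans _ _ ((ln 4 + K) * m.+1%:R `^ (1 - lam))).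
      by rewrite mulrDl addrC lerD2l IHn // en -addnn; lia.
    apply: (@le_trans _ _ (K * c * m.+1%:R `^ (1 - lam))).
      by rewrite ler_wpM2r ?powR_ge0.
    rewrite -mulrA ler_wpM2l // /c -powRM ?ler0n //.
    apply: ge0_ler_powR; rewrite ?nnegrE ?mulr_ge0 ?ler0n ?(ltW lam1_gt0) //.
    have : (1 : R) <= m%:R by rewrite ler1n.
    by rewrite -[m.*2.+1%:R]natr1 -[m.+1%:R]natr1 -muln2 natrM; lra.
  + have n3_nprime : ~~ prime n.+3.
      by apply: contraNN even_n => /even_prime[].
    rewrite prime_weight_sumS (negbTE n3_nprime) addr0.
    by apply: le_trans (IHn n.+2 (ltnSn _)) _; rewrite ler_wpM2l ?powR_nat_homo.
Qed.

End PrimeWeights.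

Section PowerMean.
Variables (R : realType) (p : R).
Hypothesis p_ge1 : 1 <= p.

Let p_gt0 : 0 < p. Proof. by rewrite (lt_le_trans ltr01). Qed.

Lemma powR_convex_comb (t x y : R) : 0 <= t <= 1 -> 0 <= x -> 0 <= y ->
  (t * x + (1 - t) * y) `^ p <= t * x `^ p + (1 - t) * y `^ p.
Proof.
move=> /andP[t_ge0 t_le1] x_ge0 y_ge0.
have := @convex_powR R p p_ge1 (Itv01 t_ge0 t_le1) x y.
by rewrite !inE /= !in_itv /= !andbT !convRE => /(_ x_ge0 y_ge0).
Qed.

(* Subadditivity of the perspective (w, x) |-> w^(1-p) x^p of the convex
   function x^p, in the form needed to add one term to a weighted sum. *)
Lemma powR_mean_cons (w a W X Y : R) :
  0 <= w -> 0 <= a -> 0 <= W -> 0 <= X -> 0 <= Y -> (W = 0 -> X = 0) ->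
  X `^ p <= W `^ (p - 1) * Y ->
  (w * a + X) `^ p <= (w + W) `^ (p - 1) * (w * a `^ p + Y).
Proof.
move=> w_ge0 a_ge0 W_ge0 X_ge0 Y_ge0 WX IH.
have [wW0|wW_neq0] := eqVneq (w + W) 0.
  have [-> W0] : w = 0 /\ W = 0 by split; lra.
  by rewrite (WX W0) mul0r addr0 powR0 ?gt_eqF // mulr_ge0 ?powR_ge0 // mul0r add0r.
have wW_gt0 : 0 < w + W by rewrite lt_neqAle eq_sym wW_neq0 addr_ge0.
set t := w / (w + W); set M := X / W.
have t01 : 0 <= t <= 1 by rewrite divr_ge0 ?addr_ge0 //= ler_pdivrMr // mul1r lerDl.
have M_ge0 : 0 <= M by rewrite divr_ge0.
have WM_le : W * M `^ p <= Y.
  have [W0|W_neq0] := eqVneq W 0; first by rewrite W0 mul0r.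
  have W_gt0 : 0 < W by rewrite lt_neqAle eq_sym W_neq0.
  rewrite -(@ler_pM2l _ (W `^ (p - 1))) ?powR_gt0 //.
  by rewrite mulrA [_ * W]mulrC mulr_powRB1 // -powRM // /M [W * _]mulrC divfK.
have mean_eq : w * a + X = (w + W) * (t * a + (1 - t) * M).
  have [W0|W_neq0] := eqVneq W 0.
    move: wW_neq0; rewrite /t /M W0 (WX W0) !addr0 => w_neq0.
    by rewrite mul0r mulr0 addr0; field.
  by rewrite /t /M; field; rewrite W_neq0 wW_neq0.
have powmean_eq : (w + W) * (t * a `^ p + (1 - t) * M `^ p) = w * a `^ p + W * M `^ p.
  by rewrite /t; field; rewrite wW_neq0.
have [t_ge0 t_le1] := andP t01.
rewrite mean_eq powRM ?(ltW wW_gt0) //; last first.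
  by apply: addr_ge0; apply: mulr_ge0; rewrite ?subr_ge0.
apply: (@le_trans _ _ ((w + W) `^ p * (t * a `^ p + (1 - t) * M `^ p))).
  by rewrite ler_wpM2l ?powR_ge0 // powR_convex_comb.
rewrite -[X in X * _](mulr_powRB1 (ltW wW_gt0)) // [_ * (w + W) `^ _]mulrC -mulrA.
by rewrite powmean_eq ler_wpM2l ?powR_ge0 // lerD2l.
Qed.

Lemma powR_weighted_sum_le (I : eqType) (s : seq I) (P : pred I) (w a : I -> R) :
  (forall i, P i -> 0 <= w i) -> (forall i, P i -> 0 <= a i) ->
  (\sum_(i <- s | P i) w i * a i) `^ p <=
  (\sum_(i <- s | P i) w i) `^ (p - 1) * \sum_(i <- s | P i) w i * a i `^ p.
Proof.
move=> w_ge0 a_ge0; elim: s => [|i s IHs].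
  by rewrite !big_nil mulr0 powR0 ?gt_eqF.
rewrite !big_cons; case: ifP => // Pi.
have sum_ge0 (F : I -> R) : (forall j, P j -> 0 <= F j) -> 0 <= \sum_(j <- s | P j) F j.
  exact: sumr_ge0.
apply: powR_mean_cons; rewrite ?w_ge0 ?a_ge0 ?sum_ge0 //.
- by move=> j Pj; rewrite mulr_ge0 ?w_ge0 ?a_ge0.
- by move=> j Pj; rewrite mulr_ge0 ?w_ge0 ?powR_ge0.
move/eqP; rewrite psumr_eq0 // => /allP w0.
rewrite big_seq_cond big1 // => j /andP[js Pj].
by rewrite (eqP (implyP (w0 j js) Pj)) mul0r.
Qed.

End PowerMean.

Section Lp.
Variables (R : realType) (p : R).

Lemma lp_sum_ge0 (f : int -> R) : (0 <= lp_sum p f)%E.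
Proof. by apply: esum_ge0 => x _; rewrite lee_fin powR_ge0. Qed.

Lemma lp_sum_fin_num (f : int -> R) : in_lp p f -> lp_sum p f \is a fin_num.
Proof. by move=> f_lp; rewrite ge0_fin_numE ?lp_sum_ge0. Qed.

Lemma lp_norm_ge0 (f : int -> R) : 0 <= lp_norm p f.
Proof. exact: powR_ge0. Qed.

Lemma powR_lp_norm (f : int -> R) : 0 < p -> lp_norm p f `^ p = fine (lp_sum p f).
Proof.
by move=> p_gt0; rewrite -powRrM mulVf ?gt_eqF // powRr1 // fine_ge0 // lp_sum_ge0.
Qed.

Lemma sum_powR_le_lp_sum (f : int -> R) (s : seq int) : in_lp p f -> uniq s ->
  \sum_(x <- s) `|f x| `^ p <= fine (lp_sum p f).
Proof.
move=> f_lp s_uniq; rewrite -lee_fin fineK ?lp_sum_fin_num //.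
apply: esum_ge; exists [set` s]; first by split=> //; exact: finite_seq.
rewrite fsbig_finite /= ?sumEFin; last exact: finite_seq.
rewrite lee_fin [X in _ <= X](perm_big s) //.
apply: uniq_perm; rewrite ?finmap.fset_uniq // => x.
rewrite in_fset_set; last exact: finite_seq.
by apply/idP/idP => [/set_mem|/mem_set].
Qed.

Hypothesis p_ge1 : 1 <= p.

(* Young's inequality ||w * |f| ||_p <= ||w||_1 ||f||_p for a finite kernel,
   tested on the finitely many points of s. *)
Lemma sum_weighted_shifts_le (I : finType) (P : pred I) (w : I -> R)
    (sh : I -> int) (f : int -> R) (s : seq int) :
  in_lp p f -> uniq s -> (forall i, P i -> 0 <= w i) ->
  \sum_(x <- s) (\sum_(i | P i) w i * `|f (x - sh i)|) `^ p <=
  (\sum_(i | P i) w i) `^ p * fine (lp_sum p f).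
Proof.
move=> f_lp s_uniq w_ge0.
set W := \sum_(i | P i) w i; have W_ge0 : 0 <= W by exact: sumr_ge0.
apply: (@le_trans _ _
    (\sum_(x <- s) W `^ (p - 1) * \sum_(i | P i) w i * `|f (x - sh i)| `^ p)).
  by apply: ler_sum => x _; apply: powR_weighted_sum_le.
rewrite -mulr_sumr exchange_big /=.
apply: (@le_trans _ _ (W `^ (p - 1) * \sum_(i | P i) w i * fine (lp_sum p f))).
  apply: ler_wpM2l; first exact: powR_ge0.
  apply: ler_sum => i Pi; rewrite -mulr_sumr ler_wpM2l ?w_ge0 //.
  rewrite -(big_map (fun x => x - sh i) predT (fun y => `|f y| `^ p)).
  by rewrite sum_powR_le_lp_sum // map_inj_uniq //; exact: addIr.
rewrite -mulr_suml -/W mulrA ler_wpM2r ?fine_ge0 ?lp_sum_ge0 //.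
by rewrite mulrC mulr_powRB1 // (lt_le_trans ltr01).
Qed.

End Lp.

Lemma counting_le (R : realType) (T : choiceType) (E : set T) (B : R) :
  (forall s : seq T, uniq s -> (forall x, x \in s -> E x) -> (size s)%:R <= B) ->
  (counting E <= B%:E)%E.
Proof.
move=> size_le.
have E_fin : finite_set E.
  apply: contrapT => /(infinite_set_fset (Num.truncn B).+1)[s sE s_big].
  have := size_le _ (finmap.fset_uniq s) sE.
  by apply/negP; rewrite -ltNge (lt_le_trans (truncnS_gt B)) // ler_nat.
rewrite /counting asboolT // lee_fin size_le ?finmap.fset_uniq // => x.
by rewrite in_fset_set // => /set_mem.
Qed.

Section LevelSets.
Variables (R : realType) (lam p : R) (N : nat) (f : int -> R).

Lemma J_le_weighted_shifts x :
  J lam N f x <=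
  \sum_(r < N.+1 | prime r) prime_weight lam r * `|f (x - (r : nat)%:Z)|.
Proof.
apply: ler_sum => r r_prime; apply: le_trans (ler_norm _) _.
rewrite !normrM normfV [`|ln _|]ger0_norm ?ln_ge0 ?ler1n ?prime_gt0 //.
rewrite [`|_ `^ _|]ger0_norm ?powR_ge0 //.
by rewrite /prime_weight [X in _ <= X]mulrC mulrA.
Qed.

Lemma counting_J_gt_le (alpha : R) : 1 <= p -> 0 < alpha -> in_lp p f ->
  (counting [set x | (alpha < J lam N f x)%R] <=
   ((\sum_(r < N.+1 | prime r) prime_weight lam r) `^ p * fine (lp_sum p f)
     / alpha `^ p)%:E)%E.
Proof.
move=> p_ge1 alpha_gt0 f_lp; apply: counting_le => s s_uniq s_sub.
rewrite ler_pdivlMr ?powR_gt0 // mulrC -sum1_size natr_sum mulr_sumr.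
pose shift (r : 'I_N.+1) := (r : nat)%:Z.
apply: le_trans (sum_weighted_shifts_le p_ge1 shift f_lp s_uniq _).
  rewrite big_seq [X in _ <= X]big_seq; apply: ler_sum => x /s_sub /= alpha_lt.
  have J_lt := lt_le_trans alpha_lt (J_le_weighted_shifts x).
  rewrite mulr1; apply: ge0_ler_powR; rewrite ?nnegrE ?(le_trans ler01 p_ge1) //.
  - exact: ltW.
  - exact/ltW/(lt_trans alpha_gt0).
  - exact: ltW.
by move=> r /prime_gt0; apply: prime_weight_ge0.
Qed.

End LevelSets.

Lemma weak_type_rescale (R : realType) (lam p q C K n F alpha A : R) :
  0 < p -> p < q -> q^-1 = p^-1 - (1 - lam) ->
  0 < C -> 0 <= K -> 0 < n -> 0 <= F -> 0 < alpha ->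
  alpha <= C * n `^ (- q^-1) * F -> 0 <= A -> A <= K * n `^ (1 - lam) ->
  alpha `^ q * (A `^ p * F `^ p / alpha `^ p) <= C `^ (q - p) * K `^ p * F `^ q.
Proof.
move=> p_gt0 p_lt_q qE C_gt0 K_ge0 n_gt0 F_ge0 alpha_gt0 alpha_le A_ge0 A_le.
have q_gt0 : 0 < q by apply: lt_trans p_lt_q.
have powR_split (x : R) : 0 <= x -> x `^ q = x `^ (q - p) * x `^ p.
  by move=> x_ge0; rewrite -powRD ?subrK // gt_eqF ?implybT.
have n_exponents : n `^ (- q^-1 * (q - p)) * n `^ ((1 - lam) * p) = 1.
  rewrite -powRD; last by rewrite (gt_eqF n_gt0) implybT.
  rewrite -[RHS](powRr0 n); congr (_ `^ _).
  have -> : 1 - lam = p^-1 - q^-1 by rewrite qE; ring.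
  by field; rewrite !gt_eqF.
have rescaled : (C * n `^ (- q^-1) * F) `^ (q - p) *
    ((K * n `^ (1 - lam)) `^ p * F `^ p) = C `^ (q - p) * K `^ p * F `^ q.
  rewrite !powRM ?mulr_ge0 ?powR_ge0 ?(ltW C_gt0) ?(ltW n_gt0) //.
  rewrite -!powRrM (powR_split F) //.
  transitivity (C `^ (q - p) * K `^ p * (F `^ (q - p) * F `^ p) *
    (n `^ (- q^-1 * (q - p)) * n `^ ((1 - lam) * p))); first by ring.
  by rewrite n_exponents mulr1.
rewrite (powR_split alpha (ltW alpha_gt0)) -mulrA [alpha `^ p * _]mulrC.
rewrite divfK ?gt_eqF ?powR_gt0 // -rescaled.
apply: ler_pM; rewrite ?mulr_ge0 ?powR_ge0 //.
  by apply: ge0_ler_powR; rewrite ?nnegrE ?subr_ge0 ?(ltW p_lt_q) ?(ltW alpha_gt0)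
    ?mulr_ge0 ?powR_ge0 ?(ltW C_gt0).
rewrite ler_wpM2r ?powR_ge0 //.
by rewrite ge0_ler_powR ?nnegrE ?(ltW p_gt0) ?mulr_ge0 ?powR_ge0.
Qed.

Lemma lt_sobolev_exponent (R : realType) (lam p q : R) :
  0 < p -> lam < 1 -> p < (1 - lam)^-1 -> q^-1 = p^-1 - (1 - lam) -> p < q.
Proof.
move=> p_gt0 lam_lt1 p_lt qE.
have lam1_gt0 : 0 < 1 - lam by rewrite subr_gt0.
have qV_gt0 : 0 < q^-1.
  by rewrite qE subr_gt0 -(invrK (1 - lam)) ltf_pV2 ?posrE ?invr_gt0.
have q_gt0 : 0 < q by rewrite -invr_gt0.
by rewrite -ltf_pV2 ?posrE // qE ltrBlDr ltrDl.
Qed.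

Theorem mainTheorem5 (R : realType) (lam C p q : R) :
  0 < lam -> lam < 1 -> 0 < C ->
  1 < p -> p < (1 - lam)^-1 ->
  q^-1 = p^-1 - (1 - lam) ->
  exists K : R, forall (N : nat) (f : int -> R), in_lp p f ->
    forall alpha : R, 0 < alpha ->
      alpha <= C * (N%:R `^ (- q^-1)) * lp_norm p f ->
      ((alpha `^ q)%:E * counting [set x : int | (alpha < J lam N f x)%R]
         <= (K * (lp_norm p f) `^ q)%:E)%E.
Proof.
move=> lam_gt0 lam_lt1 C_gt0 p_gt1 p_lt qE.
have p_gt0 : 0 < p by apply: lt_trans p_gt1.
have p_lt_q := lt_sobolev_exponent p_gt0 lam_lt1 p_lt qE.
have [K K_ge0 weight_sum_le] := prime_weight_sum_le (ltW lam_gt0) lam_lt1.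
exists (C `^ (q - p) * K `^ p) => N f f_lp alpha alpha_gt0 alpha_le.
have N_gt0 : (0 < N)%N.
  move: alpha_le; case: N => // alpha_le; rewrite powR0 ?mulr0 ?mul0r in alpha_le.
    by move: alpha_gt0; rewrite ltNge alpha_le.
  by rewrite oppr_eq0 invr_eq0 gt_eqF // (lt_trans p_gt0).
have level_set_le := counting_J_gt_le lam N (ltW p_gt1) alpha_gt0 f_lp.
apply: le_trans (lee_wpmul2l _ level_set_le) _; first by rewrite lee_fin powR_ge0.
rewrite -EFinM lee_fin -powR_lp_norm //.
apply: (weak_type_rescale (lam := lam) (n := N%:R)); rewrite ?ltr0n ?lp_norm_ge0 //.
- by rewrite -big_mkord prime_weight_sum_ge0.
- by rewrite -big_mkord weight_sum_le.
Qed.
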